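(* The variety $IG=Mod(\{f(x_1,x_1)\approx x_1\})$ of idempotent groupoids is stable.
   Context: Type $\tau=(2)$: one binary symbol $f$; terms over $X=\{x_1,x_2,\dots\}$, $W_\tau(X_n)$ terms in $x_1,\dots,x_n$. $\Sigma\models t\approx s$: every groupoid satisfying $\Sigma$ satisfies $t\approx s$; $Id(V)$ the identities of $V$. Positions $Pos(t)\subseteq\{1,2\}^*$ (root $\varepsilon$, children $p1,p2$), $sub_t(p)$ subterm at $p$, $\preceq$ prefix order, $t(p;r)$ replacement at $p$. A position $p\in Pos(t)$, $t\in W_\tau(X_n)$, is $\Sigma$-essential if some $\mathcal A\models\Sigma$ has the term operation of $t(p;x_{n+1})$ depending on $x_{n+1}$; $PEss(t,\Sigma)$ is the set of these. $SEss(t,\Sigma)=\{r\mid\Sigma\models r\approx sub_t(p)\text{ for some }p\in PEss(t,\Sigma)\}$. $P_r^t$ is the set of $\preceq$-minimal elements of $\{p\in Pos(t)\mid\Sigma\models sub_t(p)\approx r\}$; $t^\Sigma(r\leftarrow u)=t$ if $P_r^t=\emptyset$, else $t$ with subterms at all positions of $P_r^t$ replaced by $u$. A variety $V$ is stable if, with $\Sigma=Id(V)$: $t\approx s\in\Sigma$ and $r\in SEss(t,\Sigma)\cap SEss(s,\Sigma)$ imply $t^\Sigma(r\leftarrow u)\approx s^\Sigma(r\leftarrow u)\in\Sigma$ for all terms $u$. *)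

From Stdlib Require Import List Arith PeanoNat Classical ClassicalEpsilon.
Import ListNotations.

(* Terms over X = {x_1, x_2, ...}; variable x_i is [Var i]; [F t s] is f(t,s). *)
Inductive term : Type :=
| Var : nat -> term
| F : term -> term -> term.

(* Positions: words over {1,2}; [false] stands for 1, [true] for 2. *)
Definition pos := list bool.

Fixpoint sub (t : term) (p : pos) : option term :=
  match p, t with
  | [], _ => Some t
  | false :: q, F a _ => sub a q
  | true :: q, F _ b => sub b q
  | _ :: _, Var _ => None
  end.

Definition in_Pos (t : term) (p : pos) : Prop := sub t p <> None.

Fixpoint repl (t : term) (p : pos) (r : term) : term :=
  match p, t with
  | [], _ => r
  | false :: q, F a b => F (repl a q r) b
  | true :: q, F a b => F a (repl b q r)
  | _ :: _, Var _ => t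
  end.

Definition prefix (p q : pos) : Prop := exists s, q = p ++ s.

Fixpoint eval {A : Type} (op : A -> A -> A) (rho : nat -> A) (t : term) : A :=
  match t with
  | Var n => rho n
  | F a b => op (eval op rho a) (eval op rho b)
  end.

Definition upd {A : Type} (rho : nat -> A) (n : nat) (a : A) : nat -> A :=
  fun m => if Nat.eqb m n then a else rho m.

Definition satisfies (A : Type) (op : A -> A -> A) (t s : term) : Prop :=
  forall rho : nat -> A, eval op rho t = eval op rho s.

Definition idset := term -> term -> Prop.
Definition gclass := forall A : Type, (A -> A -> A) -> Prop.

Definition models (Sigma : idset) (A : Type) (op : A -> A -> A) : Prop :=
  forall t s, Sigma t s -> satisfies A op t s.

Definition Mod (Sigma : idset) : gclass := fun A op => models Sigma A op.

Definition Id (V : gclass) : idset :=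
  fun t s => forall (A : Type) (op : A -> A -> A), V A op -> satisfies A op t s.

Definition consequence (Sigma : idset) (t s : term) : Prop :=
  forall (A : Type) (op : A -> A -> A), models Sigma A op -> satisfies A op t s.

(* Largest variable index in t; t lies in W_tau(X_n) with n = maxvar t,
   and x_{n+1} = Var (S (maxvar t)) is fresh. *)
Fixpoint maxvar (t : term) : nat :=
  match t with
  | Var n => n
  | F a b => Nat.max (maxvar a) (maxvar b)
  end.

Definition fresh (t : term) : nat := S (maxvar t).

Definition PEss (t : term) (Sigma : idset) (p : pos) : Prop :=
  in_Pos t p /\
  exists (A : Type) (op : A -> A -> A), models Sigma A op /\
    exists (rho : nat -> A) (a b : A),
      eval op (upd rho (fresh t) a) (repl t p (Var (fresh t))) <>
      eval op (upd rho (fresh t) b) (repl t p (Var (fresh t))).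

Definition SEss (t : term) (Sigma : idset) (r : term) : Prop :=
  exists (p : pos) (q : term),
    PEss t Sigma p /\ sub t p = Some q /\ consequence Sigma r q.

Definition Pset (Sigma : idset) (t r : term) (p : pos) : Prop :=
  (exists q, sub t p = Some q /\ consequence Sigma q r) /\
  forall p', prefix p' p ->
    (exists q', sub t p' = Some q' /\ consequence Sigma q' r) -> p' = p.

(* Simultaneous replacement by u of the subterms at all positions of an
   antichain P (top-down: a position of P is replaced as a whole). *)
Fixpoint replace_at (P : pos -> Prop) (t : term) (u : term) : term :=
  if excluded_middle_informative (P []) then u
  else match t with
       | Var n => Var n
       | F a b => F (replace_at (fun p => P (false :: p)) a u)
                    (replace_at (fun p => P (true :: p)) b u)
       end.

(* t^Sigma(r <- u); if P_r^t is empty, replace_at returns t unchanged. *)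
Definition replace_sigma (Sigma : idset) (t r u : term) : term :=
  replace_at (Pset Sigma t r) t u.

Definition stable (V : gclass) : Prop :=
  forall t s : term, Id V t s ->
  forall r : term, SEss t (Id V) r -> SEss s (Id V) r ->
  forall u : term, Id V (replace_sigma (Id V) t r u) (replace_sigma (Id V) s r u).

Definition idem_ax : idset :=
  fun t s => t = F (Var 1) (Var 1) /\ s = Var 1.

Definition IG : gclass := Mod idem_ax.

From Stdlib Require Import List ClassicalEpsilon.
Import ListNotations.

(* The free idempotent groupoid has a transparent description: a term is in
   normal form if it has no subterm f(a,a), and [nf t] is computed bottom-up
   by the idempotent product [opn], which collapses f(a,a) to a.  Terms with
   [opn] form an idempotent groupoid in which a term evaluates (under the
   identity assignment) to its normal form, while every idempotent groupoid
   identifies t with nf t; hence t ~ s holds in IG iff nf t = nf s.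
   Since the consequences of Id(V) are exactly Id(V), the set P_r^t consists
   of the topmost positions whose subterm has the normal form of r.  The
   operation t^Sigma(r <- u) therefore commutes with [nf]: the normal form
   of the replaced term is obtained from nf t alone, by the function
   [nf_replace (nf r) (nf u)] which performs the same top-down replacement on
   normal forms.  Consequently, if nf t = nf s then the replaced terms have
   equal normal forms, for every r and u.  This gives stability of IG even
   without using the essentiality hypotheses on r. *)

Lemma consequence_Id (V : gclass) (q r : term) :
  consequence (Id V) q r <-> Id V q r.
Proof.
  split.
  - intros Hc A op HA. apply Hc. intros t s Hts. exact (Hts A op HA).
  - intros Hqr A op HM. exact (HM q r Hqr).
Qed.

Lemma Pset_nil (Sigma : idset) (t r : term) :
  Pset Sigma t r [] <-> consequence Sigma t r.
Proof.
  split.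
  - intros [[q [Hq Hc]] _]. destruct t; injection Hq as <-; exact Hc.
  - intros Hc. split.
    + exists t. split; [destruct t; reflexivity | exact Hc].
    + intros p' [w Hw] _. symmetry in Hw. apply app_eq_nil in Hw. tauto.
Qed.

Lemma Pset_cons (Sigma : idset) (b : bool) (t1 t2 r : term) (p : pos) :
  ~ consequence Sigma (F t1 t2) r ->
  Pset Sigma (F t1 t2) r (b :: p) <-> Pset Sigma (if b then t2 else t1) r p.
Proof.
  intros Hroot.
  assert (Hsub : forall p', sub (F t1 t2) (b :: p') = sub (if b then t2 else t1) p')
    by (destruct b; reflexivity).
  split.
  - intros [[q [Hq Hc]] Hmin]. rewrite Hsub in Hq. split; [eauto|].
    intros p' [w Hw] [q' [Hq' Hc']].
    assert (E : b :: p' = b :: p).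
    { apply Hmin; [exists w; simpl; congruence | exists q'; rewrite Hsub; auto]. }
    injection E; auto.
  - intros [[q [Hq Hc]] Hmin]. split; [exists q; rewrite Hsub; auto|].
    intros [|b' p'] [w Hw] [q' [Hq' Hc']].
    + injection Hq' as <-. contradiction.
    + injection Hw as <- Hw. rewrite Hsub in Hq'. f_equal.
      apply Hmin; [exists w; exact Hw | eauto].
Qed.

Lemma replace_at_ext (P Q : pos -> Prop) (t u : term) :
  (forall p, P p <-> Q p) -> replace_at P t u = replace_at Q t u.
Proof.
  revert P Q; induction t as [n|t1 IH1 t2 IH2]; intros P Q HPQ; simpl;
    destruct (excluded_middle_informative (P [])) as [hp|hp];
    destruct (excluded_middle_informative (Q [])) as [hq|hq];
    try reflexivity; try (exfalso; firstorder; fail).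
  f_equal; [apply IH1 | apply IH2]; intro; apply HPQ.
Qed.

Lemma replace_sigma_root (Sigma : idset) (t r u : term) :
  consequence Sigma t r -> replace_sigma Sigma t r u = u.
Proof.
  intros Hc. unfold replace_sigma. destruct t; simpl;
    destruct (excluded_middle_informative _) as [_|h];
    solve [reflexivity | exfalso; apply h, Pset_nil, Hc].
Qed.

Lemma replace_sigma_Var (Sigma : idset) (n : nat) (r u : term) :
  ~ consequence Sigma (Var n) r -> replace_sigma Sigma (Var n) r u = Var n.
Proof.
  intros Hc. unfold replace_sigma. simpl.
  destruct (excluded_middle_informative _) as [h|_]; [|reflexivity].
  exfalso. apply Hc, Pset_nil, h.
Qed.

Lemma replace_sigma_F (Sigma : idset) (t1 t2 r u : term) :
  ~ consequence Sigma (F t1 t2) r ->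
  replace_sigma Sigma (F t1 t2) r u =
  F (replace_sigma Sigma t1 r u) (replace_sigma Sigma t2 r u).
Proof.
  intros Hc. unfold replace_sigma. simpl.
  destruct (excluded_middle_informative _) as [h|_].
  - exfalso. apply Hc, Pset_nil, h.
  - f_equal; apply replace_at_ext; intro p;
      [apply (Pset_cons Sigma false) | apply (Pset_cons Sigma true)]; exact Hc.
Qed.

Definition term_eq_dec : forall x y : term, {x = y} + {x <> y}.
Proof. decide equality; apply PeanoNat.Nat.eq_dec. Defined.

Arguments term_eq_dec : simpl never.

Definition opn (x y : term) : term := if term_eq_dec x y then x else F x y.

Lemma opn_idem (x : term) : opn x x = x.
Proof. unfold opn. destruct (term_eq_dec x x); congruence. Qed.

Lemma opn_neq (x y : term) : x <> y -> opn x y = F x y.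
Proof. intros Hxy. unfold opn. destruct (term_eq_dec x y); [contradiction | reflexivity]. Qed.

Fixpoint nf (t : term) : term :=
  match t with Var n => Var n | F a b => opn (nf a) (nf b) end.

Lemma eval_opn_Var (t : term) : eval opn Var t = nf t.
Proof. induction t; simpl; congruence. Qed.

Lemma eval_nf (A : Type) (op : A -> A -> A) (idem : forall x, op x x = x)
  (rho : nat -> A) (t : term) : eval op rho t = eval op rho (nf t).
Proof.
  induction t as [n|t1 IH1 t2 IH2]; simpl; [reflexivity|].
  rewrite IH1, IH2. unfold opn.
  destruct (term_eq_dec (nf t1) (nf t2)) as [e|e]; [rewrite <- e; apply idem | reflexivity].
Qed.

Lemma IG_idem (A : Type) (op : A -> A -> A) : IG A op -> forall x : A, op x x = x.
Proof. intros HA x. exact (HA _ _ (conj eq_refl eq_refl) (fun _ => x)). Qed.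

Lemma opn_IG : IG term opn.
Proof. intros t s [-> ->] rho. apply opn_idem. Qed.

Lemma IdIG_nf (t s : term) : Id IG t s <-> nf t = nf s.
Proof.
  split.
  - intros Hts. rewrite <- !eval_opn_Var. apply Hts, opn_IG.
  - intros e A op HA rho. pose proof (IG_idem A op HA) as idem.
    rewrite (eval_nf A op idem rho t), (eval_nf A op idem rho s), e. reflexivity.
Qed.

Lemma consequence_IG_nf (q r : term) : consequence (Id IG) q r <-> nf q = nf r.
Proof. rewrite consequence_Id. apply IdIG_nf. Qed.

Fixpoint nf_replace (R U n : term) : term :=
  if term_eq_dec n R then U else
  match n with Var k => Var k | F a b => opn (nf_replace R U a) (nf_replace R U b) end.

Lemma nf_replace_hit (R U : term) : nf_replace R U R = U.
Proof. destruct R; simpl; destruct (term_eq_dec _ _); congruence. Qed.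

Lemma nf_replace_opn (R U a b : term) : opn a b <> R ->
  nf_replace R U (opn a b) = opn (nf_replace R U a) (nf_replace R U b).
Proof.
  intros Hab. destruct (term_eq_dec a b) as [<-|ne].
  - rewrite !opn_idem. reflexivity.
  - rewrite opn_neq in * by exact ne. simpl.
    destruct (term_eq_dec _ _); [contradiction | reflexivity].
Qed.

Lemma nf_replace_sigma_hit (t r u : term) : nf t = nf r ->
  nf (replace_sigma (Id IG) t r u) = nf_replace (nf r) (nf u) (nf t).
Proof.
  intros e. rewrite replace_sigma_root, e, nf_replace_hit by (apply consequence_IG_nf, e).
  reflexivity.
Qed.

Lemma nf_replace_sigma (t r u : term) :
  nf (replace_sigma (Id IG) t r u) = nf_replace (nf r) (nf u) (nf t).
Proof.
  induction t as [n|t1 IH1 t2 IH2].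
  - destruct (term_eq_dec (Var n) (nf r)) as [e|ne]; [exact (nf_replace_sigma_hit (Var n) _ _ e)|].
    rewrite replace_sigma_Var by (rewrite consequence_IG_nf; exact ne). simpl.
    destruct (term_eq_dec (Var n) (nf r)); [contradiction | reflexivity].
  - destruct (term_eq_dec (nf (F t1 t2)) (nf r)) as [e|ne];
      [exact (nf_replace_sigma_hit (F t1 t2) _ _ e)|].
    rewrite replace_sigma_F by (rewrite consequence_IG_nf; exact ne).
    simpl in *. rewrite nf_replace_opn, IH1, IH2 by exact ne. reflexivity.
Qed.

Theorem theorem5p1 : stable IG.
Proof.
  intros t s Hts r _ _ u. apply IdIG_nf in Hts.
  apply IdIG_nf. rewrite !nf_replace_sigma, Hts. reflexivity.
Qed.
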